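(* Let $\alpha=(\alpha_1,\dots,\alpha_t)\in\mathcal{P}(n)$ with $\delta(\alpha)=\big(1,2,\dots,q,q^{(s_q)},(q-1)^{(s_{q-1})},\dots,1^{(s_1)}\big)$, let $\overline{\alpha}=(\overline{\alpha}_1,\dots,\overline{\alpha}_q)$ with $\overline{\alpha}_i=q-i+1+\sum_{k=i}^q s_k$, and let $\underline{\alpha}=\overline{\alpha}^*$. If $\alpha\neq\overline{\alpha}$, then $\alpha_i=\alpha_{i+1}$ for some $1\le i\le t$. Equivalently, if $\alpha\neq\underline{\alpha}$, then $\alpha_i-\alpha_{i+1}>1$ for some $1\le i\le t$ (with the convention $\alpha_{t+1}=0$).
   Context: A partition of a positive integer $n$ is a finite non-increasing sequence $\alpha=(\alpha_1,\dots,\alpha_t)$ of positive integers with sum $n$; $\mathcal{P}(n)$ is the set of partitions of $n$, and $\alpha_i=0$ for $i>t$. The diagonal sequence is $\delta(\alpha)=(d_k)_{k\ge1}$ with $d_k=|\{i:1\le i\le k,\ \alpha_i+i-1\ge k\}|$, trailing zeros omitted; every diagonal sequence has the stated form for some $q\ge1$ and integers $s_1,\dots,s_q\ge0$, where $j^{(s)}$ denotes $s$ consecutive entries equal to $j$. The conjugate $\beta^*$ of a partition $\beta$ has parts $\beta^*_j=|\{i:\beta_i\ge j\}|$. *)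

From mathcomp Require Import all_boot.
Set Implicit Arguments. Unset Strict Implicit. Unset Printing Implicit Defensive.

(* A partition of n: a finite non-increasing sequence of positive integers
   with sum n.  Parts are 1-indexed in the paper: alpha_i = nth 0 a (i-1),
   and alpha_i = 0 for i > t = size a. *)
Definition part (a : seq nat) (i : nat) : nat := nth 0 a i.-1.

Definition is_partition (n : nat) (a : seq nat) : Prop :=
  [/\ sorted geq a, all (fun x => 0 < x) a & sumn a = n].

Definition diag_entry (a : seq nat) (k : nat) : nat :=
  count (fun i => k <= part a i + i - 1) (iota 1 k).

(* trailing zeros omitted: d_k > 0 iff k <= max_i (alpha_i + i - 1) *)
Definition diag_len (a : seq nat) : nat :=
  \max_(i <- iota 1 (size a)) (part a i + i - 1).

Definition diag_seq (a : seq nat) : seq nat :=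
  [seq diag_entry a k | k <- iota 1 (diag_len a)].

Definition diag_form (q : nat) (s : nat -> nat) : seq nat :=
  iota 1 q ++ flatten [seq nseq (s j) j | j <- rev (iota 1 q)].

Definition alpha_bar (q : nat) (s : nat -> nat) : seq nat :=
  [seq q - i + 1 + \sum_(i <= k < q.+1) s k | i <- iota 1 q].

Definition conjugate (b : seq nat) : seq nat :=
  [seq count (fun x => j <= x) b | j <- iota 1 (head 0 b)].

From mathcomp Require Import all_boot zify.

(* d_k counts the cells (i, k + 1 - i) of the Young diagram of alpha on the
   k-th antidiagonal.  When the parts of alpha are distinct, alpha_i + i is
   non-increasing, so d_k >= i exactly for i <= k <= alpha_i + i - 1: the number
   of entries >= i of delta(alpha) is alpha_i, and for the given shape of
   delta(alpha) this number is the i-th part of overline alpha.  When all the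
   differences alpha_i - alpha_(i+1) are at most 1, the conjugate alpha* has
   distinct parts and, its diagram being the transpose, the same diagonal
   sequence; hence alpha* = overline alpha and alpha = underline alpha. *)

Definition diag_count (f : nat -> nat) (k : nat) : nat :=
  count (fun i => k <= f i + i - 1) (iota 1 k).

Lemma diag_seqE a : diag_seq a = map (diag_count (part a)) (iota 1 (diag_len a)).
Proof. by []. Qed.

Lemma geq_trans : transitive geq.
Proof. by move=> y x z le_yx le_zy; apply: leq_trans le_zy le_yx. Qed.

Lemma iota1S n : iota 1 n.+1 = rcons (iota 1 n) n.+1.
Proof. by rewrite -cats1; have := iotaD 1 n 1; rewrite addn1 add1n. Qed.

Lemma count_iota_interval i j n : 0 < i ->
  count (fun k => i <= k <= j) (iota 1 n) = minn n j - i.-1.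
Proof.
move=> i_gt0; elim: n => [|n IHn]; first by rewrite min0n.
rewrite iota1S -cats1 count_cat IHn /= addn0.
by case: (boolP (i <= n.+1 <= j)) => /=; lia.
Qed.

Lemma count_iota_rev (P : pred nat) n :
  count P (iota 1 n) = count (fun i => P (n.+1 - i)) (iota 1 n).
Proof.
rewrite -!sum1_count -[iota 1 n]/(iota 1 n.+1.-1) -subn1 -/(index_iota 1 n.+1).
by rewrite big_nat_rev; apply: eq_bigl => i /=; rewrite add1n subSS.
Qed.

Lemma count_iota_downclosed (P : pred nat) n :
  (forall i j, 0 < i <= j -> j <= n -> P j -> P i) ->
  forall i, 0 < i -> (i <= count P (iota 1 n)) = (i <= n) && P i.
Proof.
elim: n => [|n IHn] P_down i i_gt0; first by rewrite /= leqNgt i_gt0.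
have [Pn1 | notPn1] := boolP (P n.+1).
  have: all P (iota 1 n.+1).
    by apply/allP=> j; rewrite mem_iota add1n ltnS => j_range; apply: (P_down j n.+1).
  rewrite all_count size_iota => /eqP->.
  by case: (leqP i n.+1) => //= le_in1; rewrite (P_down i n.+1) ?i_gt0.
rewrite iota1S -cats1 count_cat /= (negbTE notPn1) /= !addn0 IHn //; last first.
  by move=> i' j i'_range le_jn; apply: P_down; rewrite // ltnW.
by rewrite [i <= n.+1]leq_eqVlt ltnS; case: eqP => [->|_]; rewrite ?ltnn ?(negbTE notPn1).
Qed.

Lemma count_geq_diag_form q s i : 0 < i <= q.+1 ->
  count (fun d => i <= d) (diag_form q s) = q.+1 - i + \sum_(i <= k < q.+1) s k.
Proof.
case/andP=> i_gt0 le_iq1; rewrite count_cat count_flatten -map_comp map_rev sumn_rev.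
congr (_ + _).
  rewrite (eq_in_count (a2 := fun k => i <= k <= q)) ?count_iota_interval ?minnn //; first lia.
  by move=> k; rewrite mem_iota add1n ltnS /= => /andP[_ ->]; rewrite andbT.
rewrite sumnE big_map (big_nat_widenl _ _ _ _ _ i_gt0) big_mkcond /= /index_iota subn1 /=.
by apply: eq_bigr => j _; rewrite count_nseq; case: (i <= j); rewrite ?mul1n.
Qed.

Section StrictlyDecreasing.

Variables (f : nat -> nat) (t : nat).
Hypothesis f_decr : forall i, 0 < i <= t -> f i.+1 < f i.
Hypothesis f_supp : forall i, t < i -> f i = 0.

Lemma strict_gt0 i : 0 < i <= t -> 0 < f i.
Proof. by move=> /f_decr; apply: leq_ltn_trans. Qed.

Lemma strict_add_nonincr i j : 0 < i <= j -> j <= t.+1 -> f j + j <= f i + i.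
Proof.
move=> /andP[i_gt0 le_ij] le_jt.
apply: (@homo_leq_in _ [pred k | 0 < k <= t.+1] (fun k => f k + k) (fun x y => geq x y))
  => //=.
- exact: geq_trans.
- by move=> a b a_range b_range k; rewrite !inE in a_range b_range *; lia.
- by move=> k; rewrite !inE => /andP[k_gt0 _] k1_range; have := f_decr k; lia.
- by rewrite inE i_gt0; lia.
- by rewrite inE; lia.
Qed.

Lemma leq_diag_count k i : 0 < i ->
  (i <= diag_count f k) = (i <= k) && (k <= f i + i - 1).
Proof.
apply: count_iota_downclosed => i' j /andP[i'_gt0 le_i'j] le_jk /= le_k_fj.
have [le_jt1 | lt_t1j] := leqP j t.+1.
  by apply: leq_trans le_k_fj _; rewrite leq_sub2r // strict_add_nonincr ?i'_gt0.
by move: le_k_fj; rewrite f_supp; lia.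
Qed.

Lemma count_geq_diag_count L i : f 1 <= L -> 0 < i ->
  count (fun d => i <= d) (map (diag_count f) (iota 1 L)) = f i.
Proof.
move=> le_f1L i_gt0; rewrite count_map.
rewrite (eq_count (a2 := fun k => i <= k <= f i + i - 1)); last first.
  by move=> k /=; rewrite leq_diag_count.
rewrite count_iota_interval //.
have [le_it | lt_ti] := leqP i t; last by rewrite f_supp //; lia.
have : f i + i <= f 1 + 1 by apply: strict_add_nonincr; lia.
lia.
Qed.

Lemma diag_form_strict L q s : f 1 <= L ->
  map (diag_count f) (iota 1 L) = diag_form q s ->
  t = q /\ map f (iota 1 q) = alpha_bar q s.
Proof.
move=> le_f1L diagE.
have f_bar i : 0 < i <= q.+1 -> f i = q.+1 - i + \sum_(i <= k < q.+1) s k.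
  move=> /[dup] i_range /andP[i_gt0 _].
  by rewrite -(@count_geq_diag_count L i) // diagE count_geq_diag_form.
have t_q : t = q.
  have [lt_tq | lt_qt | //] := ltngtP t q.
    by move: (f_bar q); rewrite f_supp // big_nat_recr //=; lia.
  by move: (f_bar q.+1) (strict_gt0 q.+1); rewrite big_geq //; lia.
split=> //; apply/eq_in_map => i; rewrite mem_iota add1n ltnS => i_range /=.
by rewrite f_bar; [congr (_ + _); lia | lia].
Qed.

End StrictlyDecreasing.

Lemma part_default a i : size a < i -> part a i = 0.
Proof.
by move=> lt_ai; rewrite /part nth_default // -ltnS prednK // (leq_ltn_trans _ lt_ai).
Qed.

Lemma part_gt0 a i : all (fun x => 0 < x) a -> 0 < i <= size a -> 0 < part a i.
Proof.
move=> /allP a_gt0 /andP[i_gt0 le_ia]; apply: a_gt0; apply: mem_nth.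
by rewrite -ltnS prednK.
Qed.

Lemma part_nonincr a : sorted geq a -> {homo part a : i j /~ i <= j}.
Proof.
move=> a_sorted i j.
apply: (@homo_leq _ (part a) (fun x y => geq x y)) => [x|y x z|[|k]] //=.
  exact: geq_trans.
have [lt_k1a | le_ak1] := ltnP k.+1 (size a); last by rewrite /part nth_default.
by apply: (sorted_leq_nth geq_trans leqnn) => //=; rewrite inE ltnW.
Qed.

Lemma map_part_iota a : map (part a) (iota 1 (size a)) = a.
Proof.
rewrite -[RHS](mkseq_nth 0 a) /mkseq (iotaDl 1 0) -map_comp.
by apply: eq_map => i; rewrite /part.
Qed.

Lemma leq_count_geq a i j : sorted geq a -> 0 < i -> 0 < j ->
  (i <= count (fun x => j <= x) a) = (j <= part a i).
Proof.
move=> a_sorted i_gt0 j_gt0.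
rewrite -{1}(map_part_iota a) count_map count_iota_downclosed //=; last first.
  by move=> i' k /andP[_ le_i'k] _ /leq_trans; apply; apply: part_nonincr.
by case: leqP => //= lt_ai; rewrite part_default // leqNgt j_gt0.
Qed.

Lemma size_conjugate a : size (conjugate a) = part a 1.
Proof. by rewrite size_map size_iota /part nth0. Qed.

Lemma part_conjugate a j : sorted geq a -> 0 < j ->
  part (conjugate a) j = count (fun x => j <= x) a.
Proof.
move=> a_sorted j_gt0; have [le_ja1 | lt_a1j] := leqP j (part a 1).
  have lt_j1_a1 : j.-1 < head 0 a by rewrite prednK.
  by rewrite /part /conjugate (nth_map 0) ?nth_iota ?size_iota // add1n prednK.
rewrite part_default ?size_conjugate //; apply/esym/eqP.
by rewrite -leqn0 leqNgt leq_count_geq // -ltnNge.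
Qed.

Lemma part_conjugate1 a : sorted geq a -> all (fun x => 0 < x) a ->
  part (conjugate a) 1 = size a.
Proof. by move=> a_sorted a_gt0; rewrite part_conjugate //; apply/eqP; rewrite -all_count. Qed.

Lemma conjugateK a : sorted geq a -> all (fun x => 0 < x) a -> conjugate (conjugate a) = a.
Proof.
move=> a_sorted a_gt0.
rewrite {1}/conjugate -nth0 -[nth 0 _ 0]/(part (conjugate a) 1) part_conjugate1 //.
rewrite -[RHS]map_part_iota; apply/eq_in_map => j; rewrite mem_iota => /andP[j_gt0 _].
rewrite /conjugate count_map (eq_in_count (a2 := fun i => 1 <= i <= part a j)); last first.
  by move=> i; rewrite mem_iota /= => /andP[i_gt0 _]; rewrite leq_count_geq ?i_gt0.
rewrite count_iota_interval // subn0 -nth0; apply/minn_idPr.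
exact: (@part_nonincr a a_sorted j 1 j_gt0).
Qed.

Lemma diag_count_conjugate a k : sorted geq a ->
  diag_count (part (conjugate a)) k = diag_count (part a) k.
Proof.
move=> a_sorted; rewrite /diag_count [LHS]count_iota_rev.
apply: eq_in_count => i; rewrite mem_iota add1n ltnS => /andP[i_gt0 le_ik] /=.
rewrite part_conjugate ?subn_gt0 //.
transitivity (i <= count (fun x => k.+1 - i <= x) a); first by apply/idP/idP; lia.
by rewrite leq_count_geq ?subn_gt0 //; apply/idP/idP; lia.
Qed.

Lemma part_add_leq_diag_len a i : 0 < i <= size a -> part a i + i - 1 <= diag_len a.
Proof.
move=> i_range; apply: (leq_bigmax_seq (F := fun i => part a i + i - 1)) => //.
by rewrite mem_iota add1n ltnS.
Qed.

Lemma head_leq_diag_len a : part a 1 <= diag_len a.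
Proof.
have [/size0nil-> // | size_gt0] := posnP (size a).
by have := @part_add_leq_diag_len a 1; rewrite addnK; apply; rewrite size_gt0.
Qed.

Lemma size_leq_diag_len a : all (fun x => 0 < x) a -> size a <= diag_len a.
Proof.
move=> a_gt0; have [-> // | size_gt0] := posnP (size a).
have := @part_gt0 a (size a) a_gt0; have := @part_add_leq_diag_len a (size a).
rewrite size_gt0 leqnn; lia.
Qed.

Lemma strict_seq_diag_form b L q s :
  (forall i, 0 < i <= size b -> part b i.+1 < part b i) -> part b 1 <= L ->
  map (diag_count (part b)) (iota 1 L) = diag_form q s -> b = alpha_bar q s.
Proof.
move=> b_decr le_b1L diagE.
have [<- <-] := diag_form_strict _ _ b_decr (@part_default b) _ _ _ le_b1L diagE.
by rewrite map_part_iota.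
Qed.

Lemma conjugate_strict a : sorted geq a ->
  (forall i, 0 < i <= size a -> part a i - part a i.+1 <= 1) ->
  forall j, 0 < j <= size (conjugate a) -> part (conjugate a) j.+1 < part (conjugate a) j.
Proof.
move=> a_sorted small_gaps j; rewrite size_conjugate => /andP[j_gt0 le_ja1].
rewrite !part_conjugate //; set m := count _ a.
have le_ma : m <= size a by apply: count_size.
rewrite leq_count_geq //; have [-> // | m_gt0] := posnP m.
have le_j1_am : j.+1 <= part a m by rewrite -leq_count_geq.
have lt_am1_j1 : part a m.+1 < j.+1 by rewrite ltnNge -leq_count_geq // -/m ltnn.
by have := small_gaps m; rewrite m_gt0 le_ma; lia.
Qed.

Lemma distinct_parts_diag a q s : sorted geq a ->
  (forall i, 0 < i <= size a -> part a i != part a i.+1) ->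
  diag_seq a = diag_form q s -> a = alpha_bar q s.
Proof.
move=> a_sorted distinct; rewrite diag_seqE => diagE.
apply: (@strict_seq_diag_form a _ q s _ (head_leq_diag_len a) diagE) => i /distinct.
by rewrite ltn_neqAle eq_sym => ->; rewrite (@part_nonincr a a_sorted i.+1 i).
Qed.

Lemma small_gaps_diag a q s : sorted geq a -> all (fun x => 0 < x) a ->
  (forall i, 0 < i <= size a -> part a i - part a i.+1 <= 1) ->
  diag_seq a = diag_form q s -> a = conjugate (alpha_bar q s).
Proof.
move=> a_sorted a_gt0 small_gaps; rewrite diag_seqE => diagE.
rewrite -(@strict_seq_diag_form (conjugate a) (diag_len a)) ?conjugateK //.
- exact: conjugate_strict.
- by rewrite part_conjugate1 // size_leq_diag_len.
by rewrite -diagE; apply: eq_map => k; rewrite diag_count_conjugate.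
Qed.

Lemma iota_exists_or_forall (P : pred nat) m :
  (exists2 i, 0 < i <= m & P i) \/ (forall i, 0 < i <= m -> ~~ P i).
Proof.
have [/hasP[i] | /hasPn notP] := boolP (has P (iota 1 m)).
  by rewrite mem_iota add1n ltnS => i_range Pi; left; exists i.
by right=> i i_range; apply: notP; rewrite mem_iota add1n ltnS.
Qed.

Theorem corollary2p7 (n : nat) (alpha : seq nat) (q : nat) (s : nat -> nat) :
  is_partition n alpha -> 1 <= q ->
  diag_seq alpha = diag_form q s ->
  (alpha <> alpha_bar q s ->
     exists2 i, 1 <= i <= size alpha & part alpha i = part alpha i.+1) /\
  (alpha <> conjugate (alpha_bar q s) ->
     exists2 i, 1 <= i <= size alpha & 1 < part alpha i - part alpha i.+1).
Proof.
case=> alpha_sorted alpha_gt0 _ _ diagE; split=> alpha_neq.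
  have [[i i_range /eqP eq_i] | distinct] :=
    iota_exists_or_forall (fun i => part alpha i == part alpha i.+1) (size alpha).
    by exists i.
  by case: alpha_neq; apply: distinct_parts_diag.
have [[i i_range big_gap] | small_gaps] :=
  iota_exists_or_forall (fun i => 1 < part alpha i - part alpha i.+1) (size alpha).
  by exists i.
case: alpha_neq; apply: small_gaps_diag => // i /small_gaps.
by rewrite -leqNgt.
Qed.
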